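(* Let $\gamma\in(-1,1)$ and consider the generalized Clegg integrator (GCI), i.e. the scalar reset system $\dot u_{ci}(t)=e(t)$ when $e(t)\neq 0$, and $u_{ci}(t^+)=\gamma\,u_{ci}(t)$ when $e(t)=0$, subject to the sinusoidal input $e(t)=|E_1|\sin(\omega t)$ with $\omega>0$, satisfying the open-loop stability assumption and the Zeno-free condition stated in the context. Then the steady-state output $u_{ci}(t)$ decomposes as $$u_{ci}(t)=u_i(t)+q_i(t),$$ where $u_i(t)=-|E_1/\omega|\,[\cos(\omega t)-1]$ is the base-linear (pure integrator) output and $q_i(t)$ is the $2\pi/\omega$-periodic square wave $$q_i(t)=\begin{cases}-2|E_1|\gamma(\gamma+1)^{-1}/\omega, & t\in[2k,2k+1)\cdot\pi/\omega,\\ -2|E_1|(\gamma+1)^{-1}/\omega, & t\in[2k+1,2k+2)\cdot\pi/\omega,\end{cases}\qquad k\in\mathbb{N}.$$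
   Context: A reset controller with state $x_c\in\mathbb{R}^{n_c}$, input $e$ and output $v$ is given by $\dot x_c=A_Rx_c+B_Re$ for $t\notin J$, $x_c(t^+)=A_\rho x_c(t)$ for $t\in J$, $v=C_Rx_c+D_Re$, where $J$ is the set of reset instants, i.e. the times at which the reset-triggering signal (here $e$) crosses zero. The GCI is the case $n_c=1$, $A_R=0$, $B_R=1$, $C_R=1$, $D_R=0$, $A_\rho=\gamma\in(-1,1)$. Open-loop stability assumption: $|\lambda(A_\rho e^{A_R\delta})|<1$ for all $\delta>0$ (for all eigenvalues $\lambda$), which guarantees a globally asymptotically stable $2\pi/\omega$-periodic (steady-state) solution. Zeno-free condition: the intervals $t_{i+1}-t_i$ between consecutive reset instants are bounded below by some $\sigma_{\min}>0$. *)

From Stdlib Require Export Reals.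
From Coquelicot Require Export Coquelicot.
Open Scope R_scope.

Definition gci_input (E1 w : R) (t : R) : R := Rabs E1 * sin (w * t).

(* Convention: u is right-continuous, i.e. at a reset instant t the value u t
   is the post-reset value u(t^+), and the pre-reset value is the left limit. *)
Definition gci_solution (gamma : R) (e : R -> R) (u : R -> R) : Prop :=
  (forall t, 0 < t -> e t <> 0 -> is_derive u t (e t)) /\
  (forall t, 0 <= t -> e t = 0 -> filterlim u (at_right t) (locally (u t))) /\
  (forall t, 0 < t -> e t = 0 ->
     exists l, filterlim u (at_left t) (locally l) /\ u t = gamma * l).

(* Steady state: T-periodic behaviour on [0, +oo). *)
Definition periodic_nonneg (T : R) (u : R -> R) : Prop :=
  forall t, 0 <= t -> u (t + T) = u t.

Definition zeno_free (e : R -> R) : Prop :=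
  exists sigma_min, 0 < sigma_min /\
    forall t1 t2, 0 <= t1 -> t1 < t2 -> e t1 = 0 -> e t2 = 0 ->
      sigma_min <= t2 - t1.

Definition gci_base (E1 w : R) (t : R) : R := - Rabs (E1 / w) * (cos (w * t) - 1).

From Stdlib Require Import Reals ZArith Lra Lia.
From Coquelicot Require Import Coquelicot.
Open Scope R_scope.

(* The reset instants are the zeros n π/w of the input.  Between two of them the
   state is an antiderivative of |E1| sin(w t), i.e. u t = c_n - (|E1|/w) cos(w t),
   so the post-reset values v_n = u(n π/w) obey v_(n+1) = γ (v_n + 2 (|E1|/w) (-1)^n).
   Periodicity adds v_(n+2) = v_n, and for γ ≠ ±1 this two-step affine system has
   the single solution v_n = -2 γ (|E1|/w) (-1)^n / (1 + γ), which determines u on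
   every half period; conversely the function so obtained is a periodic solution.
   With A_R = 0 the open-loop stability hypothesis is just |γ| < 1, and the
   Zeno-free condition only serves to exclude E1 = 0. *)

Lemma is_derive_0_constant (f : R -> R) (a b : R) :
  (forall t, a < t < b -> is_derive f t 0) ->
  forall s t, a < s < b -> a < t < b -> f s = f t.
Proof.
  intros Hf s t Hs Ht.
  assert (Hsub : forall x, Rmin s t <= x <= Rmax s t -> a < x < b).
  { intros x Hx; split.
    - apply Rlt_le_trans with (Rmin s t); [apply Rmin_glb_lt|]; lra.
    - apply Rle_lt_trans with (Rmax s t); [|apply Rmax_lub_lt]; lra. }
  destruct (MVT_gen f s t (fun _ => 0)) as [c [_ Hc]].
  - intros x Hx. apply Hf, Hsub. lra.
  - intros x Hx. apply continuity_pt_filterlim.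
    apply (ex_derive_continuous (K := R_AbsRing) (V := R_NormedModule)).
    exists 0. apply Hf, Hsub, Hx.
  - lra.
Qed.

Lemma filterlim_at_right_unique (f : R -> R) (x l l' : R) :
  filterlim f (at_right x) (locally l) -> filterlim f (at_right x) (locally l') ->
  l = l'.
Proof.
  pose proof (Proper_StrongProper _ (at_right_proper_filter x)).
  exact (filterlim_locally_unique f l l').
Qed.

Lemma filterlim_at_left_unique (f : R -> R) (x l l' : R) :
  filterlim f (at_left x) (locally l) -> filterlim f (at_left x) (locally l') ->
  l = l'.
Proof.
  pose proof (Proper_StrongProper _ (at_left_proper_filter x)).
  exact (filterlim_locally_unique f l l').
Qed.

Lemma filterlim_at_right_eq_on (f g : R -> R) (a b : R) :
  a < b -> (forall t, a < t < b -> f t = g t) -> continuous g a ->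
  filterlim f (at_right a) (locally (g a)).
Proof.
  intros Hab Hfg Hg.
  apply filterlim_ext_loc with g.
  - apply (locally_interval _ a (a - 1) b); try (simpl; lra).
    intros y _ Hy Hay. symmetry. apply Hfg. simpl in *. lra.
  - eapply filterlim_filter_le_1; [apply filter_le_within | exact Hg].
Qed.

Lemma filterlim_at_left_eq_on (f g : R -> R) (a b : R) :
  a < b -> (forall t, a < t < b -> f t = g t) -> continuous g b ->
  filterlim f (at_left b) (locally (g b)).
Proof.
  intros Hab Hfg Hg.
  apply filterlim_ext_loc with g.
  - apply (locally_interval _ b a (b + 1)); try (simpl; lra).
    intros y Hy _ Hyb. symmetry. apply Hfg. simpl in *. lra.
  - eapply filterlim_filter_le_1; [apply filter_le_within | exact Hg].
Qed.

Lemma eq_primitive_on (u F f : R -> R) (a b : R) :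
  a < b ->
  (forall t, a < t < b -> is_derive u t (f t)) ->
  (forall t, a <= t <= b -> is_derive F t (f t)) ->
  filterlim u (at_right a) (locally (u a)) ->
  (forall t, a <= t < b -> u t = u a + (F t - F a)) /\
  filterlim u (at_left b) (locally (u a + (F b - F a))).
Proof.
  intros Hab Hu HF Hua.
  set (C := u ((a + b) / 2) - F ((a + b) / 2)).
  assert (Hconst : forall t, a < t < b -> u t = C + F t).
  { intros t Ht.
    assert (Hd : forall x, a < x < b -> is_derive (fun y => u y - F y) x 0).
    { intros x Hx. replace 0 with (f x - f x) by ring.
      apply (is_derive_minus u F); [apply Hu | apply HF]; lra. }
    pose proof (is_derive_0_constant _ a b Hd t ((a + b) / 2) Ht) as E.
    simpl in E. unfold C. lra. }
  assert (HFc : forall t, a <= t <= b -> continuous (fun y => C + F y) t).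
  { intros t Ht. apply (ex_derive_continuous (K := R_AbsRing) (V := R_NormedModule)).
    auto_derive. exists (f t). apply HF, Ht. }
  assert (Hua' : u a = C + F a).
  { apply (filterlim_at_right_unique u a); [exact Hua|].
    apply (filterlim_at_right_eq_on u (fun y => C + F y) a b);
      [lra | exact Hconst | apply HFc; lra]. }
  split.
  - intros t Ht. destruct (Req_dec t a) as [->|Hta]; [ring|].
    rewrite Hconst by lra. lra.
  - replace (u a + (F b - F a)) with (C + F b) by lra.
    apply (filterlim_at_left_eq_on u (fun y => C + F y) a b);
      [lra | exact Hconst | apply HFc; lra].
Qed.

Lemma alternating_recurrence_2periodic (gamma c : R) (v : nat -> R) :
  gamma <> 1 -> gamma <> -1 ->
  (forall n, v (S n) = gamma * (v n + c * (-1) ^ n)) ->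
  (forall n, v (S (S n)) = v n) ->
  forall n, v n = - gamma * c * (-1) ^ n / (1 + gamma).
Proof.
  intros Hg1 Hg2 Hstep Hper n.
  pose proof (Hper n) as E. rewrite !Hstep in E. simpl in E.
  assert (Hg : (1 - gamma) * (1 + gamma) <> 0).
  { apply Rmult_integral_contrapositive; split; lra. }
  apply Rmult_eq_reg_r with ((1 - gamma) * (1 + gamma)); [|exact Hg].
  field_simplify; [|lra]. nra.
Qed.

Lemma cos_INR_PI (n : nat) : cos (INR n * PI) = (-1) ^ n.
Proof.
  induction n as [|n IH].
  - rewrite Rmult_0_l. apply cos_0.
  - rewrite S_INR, Rmult_plus_distr_r, Rmult_1_l, neg_cos, IH. simpl. ring.
Qed.

(* [Int_part] is the floor; for [t < 0] the index is truncated to [0]. *)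
Definition block_index (h t : R) : nat := Z.to_nat (Int_part (t / h)).

Lemma block_index_eq (h t : R) (n : nat) :
  0 < h -> INR n * h <= t < (INR n + 1) * h -> block_index h t = n.
Proof.
  intros Hh [H1 H2]. unfold block_index.
  rewrite <- (Int_part_spec (t / h) (Z.of_nat n)), Nat2Z.id; [reflexivity|].
  rewrite <- INR_IZR_INZ. split.
  - apply Rmult_lt_reg_r with h; [exact Hh|]. field_simplify; lra.
  - apply Rmult_le_reg_r with h; [exact Hh|]. field_simplify; lra.
Qed.

Lemma block_index_spec (h t : R) :
  0 < h -> 0 <= t ->
  INR (block_index h t) * h <= t < (INR (block_index h t) + 1) * h.
Proof.
  intros Hh Ht. unfold block_index.
  destruct (base_Int_part (t / h)) as [B1 B2].
  assert (Hth : 0 <= t / h) by (apply Rdiv_le_0_compat; lra).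
  assert (Hpos : (0 <= Int_part (t / h))%Z).
  { apply Z.lt_succ_r, lt_IZR. rewrite succ_IZR. lra. }
  rewrite INR_IZR_INZ, Z2Nat.id by exact Hpos. split.
  - apply Rmult_le_reg_r with (/ h); [apply Rinv_0_lt_compat, Hh|].
    field_simplify; lra.
  - apply Rmult_lt_reg_r with (/ h); [apply Rinv_0_lt_compat, Hh|].
    field_simplify; lra.
Qed.

Lemma zeno_free_gci_input_neq0 (E1 w : R) : zeno_free (gci_input E1 w) -> E1 <> 0.
Proof.
  intros [s [Hs Hsep]] ->.
  assert (s <= s / 2 - 0) by (apply Hsep; unfold gci_input; rewrite ?Rabs_R0; lra).
  lra.
Qed.

Section GCI.

Variables gamma E1 w : R.
Hypotheses (Hgamma : -1 < gamma < 1) (Hw : 0 < w) (HE1 : E1 <> 0).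

Local Notation h := (PI / w).
Local Notation a := (Rabs E1 / w).
Local Notation e := (gci_input E1 w).

Lemma half_period_pos : 0 < h.
Proof. apply Rdiv_lt_0_compat; [apply PI_RGT_0 | exact Hw]. Qed.

Lemma cos_reset_instant (n : nat) : cos (w * (INR n * h)) = (-1) ^ n.
Proof. rewrite <- cos_INR_PI. f_equal. field. lra. Qed.

Lemma gci_input_reset_instant (n : nat) : e (INR n * h) = 0.
Proof.
  unfold gci_input. replace (w * (INR n * h)) with (INR n * PI) by (field; lra).
  rewrite sin_eq_0_1; [ring|]. exists (Z.of_nat n). rewrite INR_IZR_INZ. reflexivity.
Qed.

Lemma gci_input_neq0 (n : nat) (t : R) :
  INR n * h < t < (INR n + 1) * h -> e t <> 0.
Proof.
  intros Ht He. unfold gci_input in He.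
  apply Rmult_integral in He as [He | He].
  - apply HE1, Rabs_eq_0, He.
  - apply sin_eq_0_0 in He as [k Hk].
    assert (Hkt : t = IZR k * h)
      by (apply Rmult_eq_reg_l with w; [rewrite Hk; field |]; lra).
    pose proof half_period_pos as Hh.
    rewrite Hkt, INR_IZR_INZ, <- plus_IZR in Ht.
    destruct Ht as [H1 H2].
    apply Rmult_lt_reg_r, lt_IZR in H1; [|exact Hh].
    apply Rmult_lt_reg_r, lt_IZR in H2; [|exact Hh].
    lia.
Qed.

Lemma gci_input_eq0 (t : R) :
  0 <= t -> e t = 0 -> t = INR (block_index h t) * h.
Proof.
  intros Ht He.
  destruct (block_index_spec h t half_period_pos Ht) as [[H1 | H1] H2]; [|lra].
  exfalso. apply (gci_input_neq0 (block_index h t) t); [lra | exact He].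
Qed.

Lemma is_derive_gci_primitive (t : R) :
  is_derive (fun x => - a * cos (w * x)) t (e t).
Proof. unfold gci_input. auto_derive; [exact I | field; lra]. Qed.

Lemma gci_solution_on_block (u : R -> R) (n : nat) :
  gci_solution gamma e u ->
  (forall t, INR n * h <= t < (INR n + 1) * h ->
     u t = u (INR n * h) + a * ((-1) ^ n - cos (w * t))) /\
  u (INR (S n) * h) = gamma * (u (INR n * h) + 2 * a * (-1) ^ n).
Proof.
  intros [Hder [Hright Hleft]].
  pose proof half_period_pos as Hh.
  assert (Hn : 0 <= INR n * h) by (apply Rmult_le_pos; [apply pos_INR | lra]).
  destruct (eq_primitive_on u (fun x => - a * cos (w * x)) e
              (INR n * h) ((INR n + 1) * h)) as [Hblock Hlim].
  - nra.
  - intros t Ht. apply Hder; [lra | exact (gci_input_neq0 n t Ht)].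
  - intros t _. apply is_derive_gci_primitive.
  - apply Hright; [exact Hn | apply gci_input_reset_instant].
  - rewrite <- S_INR, !cos_reset_instant in Hlim.
    split.
    + intros t Ht. rewrite Hblock by exact Ht. rewrite cos_reset_instant. ring.
    + destruct (Hleft (INR (S n) * h)) as [l [Hl ->]].
      * rewrite S_INR. nra.
      * apply gci_input_reset_instant.
      * rewrite (filterlim_at_left_unique u _ _ _ Hl Hlim). simpl. ring.
Qed.

Definition gci_branch (n : nat) (t : R) : R :=
  - a * cos (w * t) + a * (-1) ^ n * (1 - gamma) / (1 + gamma).

Definition gci_steady_state (t : R) : R := gci_branch (block_index h t) t.

Lemma continuous_gci_branch (n : nat) (t : R) : continuous (gci_branch n) t.
Proof.
  apply (ex_derive_continuous (K := R_AbsRing) (V := R_NormedModule)).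
  unfold gci_branch. auto_derive. exact I.
Qed.

Lemma gci_steady_state_on_block (n : nat) (t : R) :
  INR n * h <= t < (INR n + 1) * h -> gci_steady_state t = gci_branch n t.
Proof.
  intros Ht. unfold gci_steady_state.
  rewrite (block_index_eq h t n half_period_pos Ht). reflexivity.
Qed.

Lemma gci_reset_values (u : R -> R) :
  gci_solution gamma e u -> periodic_nonneg (2 * PI / w) u ->
  forall n, u (INR n * h) = - gamma * (2 * a) * (-1) ^ n / (1 + gamma).
Proof.
  intros Hu Hper.
  apply (alternating_recurrence_2periodic gamma (2 * a) (fun n => u (INR n * h))).
  - lra.
  - lra.
  - intros n. rewrite (proj2 (gci_solution_on_block u n Hu)). ring.
  - intros n. rewrite <- (Hper (INR n * h)).
    + f_equal. rewrite !S_INR. field. lra.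
    + apply Rmult_le_pos; [apply pos_INR | left; apply half_period_pos].
Qed.

Lemma gci_periodic_solution_eq (u : R -> R) :
  gci_solution gamma e u -> periodic_nonneg (2 * PI / w) u ->
  forall t, 0 <= t -> u t = gci_steady_state t.
Proof.
  intros Hu Hper t Ht.
  pose proof (block_index_spec h t half_period_pos Ht) as Hb.
  rewrite (gci_steady_state_on_block _ t Hb).
  rewrite (proj1 (gci_solution_on_block u _ Hu) t Hb), (gci_reset_values u Hu Hper).
  unfold gci_branch. field. lra.
Qed.

Lemma gci_steady_state_solution : gci_solution gamma e gci_steady_state.
Proof.
  pose proof half_period_pos as Hh.
  split; [|split].
  - intros t Ht He.
    pose proof (block_index_spec h t Hh (Rlt_le _ _ Ht)) as Hb.
    set (n := block_index h t) in Hb.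
    assert (Hnt : INR n * h < t).
    { destruct Hb as [[Hlt | Heq] _]; [exact Hlt|].
      contradict He. rewrite <- Heq. apply gci_input_reset_instant. }
    apply is_derive_ext_loc with (gci_branch n).
    + apply (locally_interval _ t (INR n * h) ((INR n + 1) * h)); [simpl; lra | simpl; lra |].
      intros y Hy1 Hy2. symmetry. apply gci_steady_state_on_block. simpl in *. lra.
    + unfold gci_branch, gci_input. auto_derive; [exact I | field; lra].
  - intros t Ht He.
    pose proof (gci_input_eq0 t Ht He) as Hz.
    set (n := block_index h t) in Hz. clearbody n. subst t.
    rewrite (gci_steady_state_on_block n) by nra.
    apply (filterlim_at_right_eq_on _ _ _ ((INR n + 1) * h)); [nra | | apply continuous_gci_branch].
    intros s Hs. apply gci_steady_state_on_block. lra.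
  - intros t Ht He.
    pose proof (gci_input_eq0 t (Rlt_le _ _ Ht) He) as Hz.
    set (n := block_index h t) in Hz. clearbody n. subst t.
    destruct n as [|m]; [simpl in Ht; lra|].
    exists (gci_branch m (INR (S m) * h)). split.
    + rewrite S_INR.
      apply (filterlim_at_left_eq_on _ _ (INR m * h)); [nra | | apply continuous_gci_branch].
      intros s Hs. apply gci_steady_state_on_block. lra.
    + rewrite (gci_steady_state_on_block (S m)) by (rewrite S_INR; nra).
      unfold gci_branch. rewrite cos_reset_instant. simpl. field. lra.
Qed.

Lemma gci_steady_state_periodic : periodic_nonneg (2 * PI / w) gci_steady_state.
Proof.
  intros t Ht.
  pose proof (block_index_spec h t half_period_pos Ht) as Hb.
  set (n := block_index h t) in Hb.
  rewrite (gci_steady_state_on_block n t Hb).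
  rewrite (gci_steady_state_on_block (S (S n))).
  - unfold gci_branch.
    replace (w * (t + 2 * PI / w)) with (w * t + 2 * INR 1 * PI) by (simpl; field; lra).
    rewrite cos_period. simpl. field. lra.
  - replace (2 * PI / w) with (2 * h) by (field; lra). rewrite !S_INR. lra.
Qed.

End GCI.

Theorem lemma1 (gamma E1 w : R) :
  -1 < gamma < 1 -> 0 < w ->
  (* open-loop stability: |gamma * exp(A_R delta)| < 1 with A_R = 0 *)
  (forall delta, 0 < delta -> Rabs (gamma * exp (0 * delta)) < 1) ->
  zeno_free (gci_input E1 w) ->
  (exists u, gci_solution gamma (gci_input E1 w) u /\
             periodic_nonneg (2 * PI / w) u) /\
  (forall u, gci_solution gamma (gci_input E1 w) u ->
             periodic_nonneg (2 * PI / w) u ->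
   forall (k : nat) (t : R),
     (2 * INR k * PI / w <= t < (2 * INR k + 1) * PI / w ->
        u t = gci_base E1 w t + (- 2 * Rabs E1 * gamma / (gamma + 1) / w)) /\
     ((2 * INR k + 1) * PI / w <= t < (2 * INR k + 2) * PI / w ->
        u t = gci_base E1 w t + (- 2 * Rabs E1 / (gamma + 1) / w))).
Proof.
  intros Hgamma Hw _ Hzeno.
  pose proof (zeno_free_gci_input_neq0 E1 w Hzeno) as HE1.
  split.
  - exists (gci_steady_state gamma E1 w).
    split; [apply gci_steady_state_solution | apply gci_steady_state_periodic]; assumption.
  - intros u Hu Hper k t.
    assert (Habs : Rabs (E1 / w) = Rabs E1 / w).
    { unfold Rdiv. rewrite Rabs_mult, Rabs_inv, (Rabs_pos_eq w); lra. }
    assert (Hk : 0 <= INR k * (PI / w)).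
    { apply Rmult_le_pos; [apply pos_INR | left; apply half_period_pos, Hw]. }
    split; intros Ht;
      rewrite (gci_periodic_solution_eq gamma E1 w Hgamma Hw HE1 u Hu Hper t) by nra;
      unfold gci_base; rewrite Habs.
    + rewrite (gci_steady_state_on_block gamma E1 w Hw (2 * k)) by (rewrite mult_INR; simpl; lra).
      unfold gci_branch. rewrite pow_1_even. field. lra.
    + rewrite (gci_steady_state_on_block gamma E1 w Hw (S (2 * k)))
        by (rewrite S_INR, mult_INR; simpl; lra).
      unfold gci_branch. rewrite pow_1_odd. field. lra.
Qed.
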